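(* Let $\langle B,\wedge,{}'\rangle$ be an algebra with $\wedge$ binary and ${}'$ unary satisfying $x\wedge(y\wedge z)\approx y\wedge(z\wedge x)$ and $x\approx (x'\wedge y)'\wedge(x'\wedge y')'$. Then $x\wedge(y\wedge z)=(x\wedge y)\wedge z$ for all $x,y,z\in B$. *)


(* Cyclic rotations alone show that left multiples of a
   triple product do not depend on its orientation,
   x(y(zw)) = x((wz)y), as soon as w has the form a(bc); since every
   element is a product of products, this holds for all w.  Associativity
   follows by writing z = ab:
   x(y(ab)) = a((by)x) = a(x(yb)) = a(b(xy)) = (xy)(ab). *)

Section CyclicAssociativity.

Variable B : Type.
Variable meet : B -> B -> B.

Local Infix "⊓" := meet (at level 40, left associativity).

Hypothesis meet_cyc : forall x y z : B, x ⊓ (y ⊓ z) = y ⊓ (z ⊓ x).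

Lemma meet_cycV (x y z : B) : x ⊓ (y ⊓ z) = z ⊓ (x ⊓ y).
Proof. now rewrite (meet_cyc x y z), (meet_cyc y z x). Qed.

Lemma meet_split (x y z w : B) : x ⊓ (y ⊓ (z ⊓ w)) = (y ⊓ z) ⊓ (x ⊓ w).
Proof. now rewrite (meet_cycV y z w), (meet_cycV x w (y ⊓ z)). Qed.

Lemma meet_split_rot (x y z w : B) : x ⊓ (y ⊓ (z ⊓ w)) = (w ⊓ y) ⊓ (x ⊓ z).
Proof. now rewrite (meet_cycV y z w), (meet_split x w y z). Qed.

Lemma meet_orient_triple (x y z a b c : B) :
  x ⊓ (y ⊓ (z ⊓ (a ⊓ (b ⊓ c)))) = x ⊓ ((a ⊓ (b ⊓ c)) ⊓ z ⊓ y).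
Proof.
  rewrite (meet_split y z a (b ⊓ c)), (meet_cycV y b c).
  rewrite <- (meet_split_rot c a (y ⊓ b) z).
  rewrite (meet_split x c a (y ⊓ b ⊓ z)).
  rewrite (meet_split_rot (c ⊓ a) x (y ⊓ b) z).
  rewrite <- (meet_split_rot y a b c).
  rewrite <- (meet_split_rot y x (a ⊓ (b ⊓ c)) z).
  apply meet_cyc.
Qed.

Hypothesis meet_surj : forall z : B, exists x y : B, x ⊓ y = z.

Lemma meet_orient (x y z w : B) : x ⊓ (y ⊓ (z ⊓ w)) = x ⊓ ((w ⊓ z) ⊓ y).
Proof.
  destruct (meet_surj w) as [a [bc <-]].
  destruct (meet_surj bc) as [b [c <-]].
  apply meet_orient_triple.
Qed.

Lemma meet_assoc (x y z : B) : x ⊓ (y ⊓ z) = x ⊓ y ⊓ z.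
Proof.
  destruct (meet_surj z) as [a [b <-]].
  rewrite (meet_cyc y a b), (meet_cyc x a (b ⊓ y)).
  rewrite <- (meet_orient a x y b), (meet_cycV x y b).
  apply meet_cycV.
Qed.

End CyclicAssociativity.

Theorem corollary4p21 (B : Type) (meet : B -> B -> B) (comp : B -> B)
  (H1 : forall x y z : B, meet x (meet y z) = meet y (meet z x))
  (H2 : forall x y : B,
      x = meet (comp (meet (comp x) y)) (comp (meet (comp x) (comp y)))) :
  forall x y z : B, meet x (meet y z) = meet (meet x y) z.
Proof.
  apply meet_assoc; [exact H1 |].
  intros z.
  exists (comp (meet (comp z) z)), (comp (meet (comp z) (comp z))).
  now rewrite <- H2.
Qed.
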